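(* Let $S=K[x_1,\ldots,x_n]$ and $i,j\in[\lfloor n/2\rfloor]$. Then (1) if $i\neq j$, then $W_i\cap W_j=\emptyset$; (2) if $I\in W_i$, then there is a subset $B\subseteq[n]$ with $|B|=i$ and $W_B\subseteq G(I)$, and the set $W_B$ is uniquely determined by $I$ (i.e. any two such subsets $B$ yield the same $W_B$).
   Context: $K$ is a field; $G(I)$ is the minimal monomial generating set. With $\sigma$ the bijection $x_{i_1}\cdots x_{i_k}\mapsto\{i_1,\ldots,i_k\}$, the facet complex $\delta_{\mathcal{F}}(I)$ has facets $\sigma(g)$, $g\in G(I)$, the Stanley–Reisner complex is $\delta_{\mathcal{N}}(I)=\{\sigma(g)\mid g\text{ square-free monomial},\ g\notin I\}$, and a square-free monomial ideal $I$ is an $f$-ideal if both have the same $f$-vector. For a nonempty proper $B\subset[n]$ with complement $\overline B$, $W_B=\{x_ix_j\mid i\ne j,\ i,j\in B\text{ or } i,j\in\overline B\}$. An $f$-ideal $I$ whose $G(I)$ consists of square-free monomials of degree 2 is of $l$ type if $W_B\subseteq G(I)$ for some $B$ with $|B|=l$; $W_l$ is the set of $f$-ideals of $S$ of $l$ type. *)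

From mathcomp Require Import all_boot.
Set Implicit Arguments. Unset Strict Implicit. Unset Printing Implicit Defensive.

(* A square-free monomial x_{i1}...x_{ik} of S = K[x_1..x_n] is identified,
   via sigma, with the subset {i1..ik} of [n] (here 'I_n).  A square-free
   monomial ideal I is determined by the set of square-free monomials it
   contains, which is an up-closed family U of subsets of [n]. *)
Section Defs.
Variable n : nat.
Notation sset := {set 'I_n}.

Definition sqfree_monomial_ideal (U : {set sset}) : Prop :=
  forall A B : sset, A \in U -> A \subset B -> B \in U.

Definition mingens (U : {set sset}) : {set sset} :=
  [set A in U | [forall B in U, (B \subset A) ==> (B == A)]].

Definition facet_complex (U : {set sset}) : {set sset} :=
  [set F : sset | [exists g in mingens U, F \subset g]].

Definition SR_complex (U : {set sset}) : {set sset} := ~: U.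

(* number of (k-1)-dimensional faces *)
Definition nfaces (D : {set sset}) (k : nat) : nat := #|[set F in D | #|F| == k]|.

Definition f_ideal (U : {set sset}) : Prop :=
  sqfree_monomial_ideal U /\
  forall k, 0 < k -> nfaces (facet_complex U) k = nfaces (SR_complex U) k.

Definition WB (B : sset) : {set sset} :=
  [set [set x; y] | x in B, y in B & x != y] :|:
  [set [set x; y] | x in ~: B, y in ~: B & x != y].

Definition deg2_gens (U : {set sset}) : Prop :=
  forall g, g \in mingens U -> #|g| = 2.

Definition in_W (l : nat) (U : {set sset}) : Prop :=
  [/\ f_ideal U, deg2_gens U &
   exists B : sset, [/\ B != set0, B != setT, #|B| = l & WB B \subset mingens U]].
End Defs.

From mathcomp Require Import all_boot zify.
Set Implicit Arguments. Unset Strict Implicit. Unset Printing Implicit Defensive.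

(* For an f-ideal I generated in degree 2, the facet complex and the
   Stanley-Reisner complex have the same number of edges, i.e. |G(I)| equals
   the number of 2-sets outside I; as those are not generators either, at
   least half of the 2-subsets of [n] are not in G(I).  If W_B and W_B' both
   lie in G(I), every 2-set outside G(I) separates both B and B'.  With
   a, b, c, d the sizes of the cells B :&: B', B :\: B', B' :\: B and the
   complement of B :|: B', this gives n(n-1) <= 4(ad + bc), and AM-GM then
   forces a + d = 0 (B' = ~B), b + c = 0 (B' = B) or n = 2.  Since
   W_B = W_(~B) and i, j <= n/2, both parts follow. *)

Section TwoSets.
Variable n : nat.
Notation sset := {set 'I_n}.

(* Ordered pairs are counted instead of 2-sets to avoid dividing by 2. *)
Definition dpairs (Q : {set sset}) : {set 'I_n * 'I_n} :=
  [set p | (p.1 != p.2) && ([set p.1; p.2] \in Q)].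

Lemma set2_eq_set2 (x y a b : 'I_n) : x != y -> [set x; y] = [set a; b] ->
  (x = a /\ y = b) \/ (x = b /\ y = a).
Proof.
move=> nxy E.
have xab : x \in [set a; b] by rewrite -E set21.
have yab : y \in [set a; b] by rewrite -E set22.
case/set2P: xab => xE; case/set2P: yab => yE; subst x y.
all: by [left | right | rewrite eqxx in nxy].
Qed.

Lemma card_dpairs_fiber (Q : {set sset}) F : F \in Q -> #|F| = 2 ->
  #|[set p | (p \in dpairs Q) && ([set p.1; p.2] == F)]| = 2.
Proof.
move=> FQ /eqP/cards2P[a [b [nab EF]]]; subst F.
have -> : [set p | (p \in dpairs Q) && ([set p.1; p.2] == [set a; b])]
          = [set (a, b); (b, a)].
  apply/setP => -[x y]; rewrite !inE /=; apply/idP/idP.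
    case/andP=> /andP[nxy _] /eqP xyE.
    by case: (set2_eq_set2 nxy xyE) => -[-> ->]; rewrite eqxx ?orbT.
  case/orP=> /eqP[-> ->] /=; first by rewrite nab FQ eqxx.
  by rewrite eq_sym nab setUC FQ eqxx.
by rewrite cards2 xpair_eqE negb_and nab.
Qed.

Lemma card_dpairs (Q : {set sset}) :
  #|dpairs Q| = 2 * #|[set F in Q | #|F| == 2]|.
Proof.
rewrite -sum1_card (partition_big (fun p => [set p.1; p.2])
                                  (mem [set F in Q | #|F| == 2])); last first.
  by move=> [x y]; rewrite !inE /= => /andP[nxy ->]; rewrite cards2 nxy.
rewrite -sum1_card big_distrr /= muln1; apply: eq_bigr => F.
by rewrite inE => /andP[FQ /eqP F2]; rewrite sum1dep_card card_dpairs_fiber.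
Qed.

Lemma card_offdiag : #|[set p : 'I_n * 'I_n | p.1 != p.2]| = n * n - n.
Proof.
have := cardsC [set p : 'I_n * 'I_n | p.1 != p.2].
have -> : ~: [set p : 'I_n * 'I_n | p.1 != p.2] = [set (x, x) | x in 'I_n].
  apply/setP => -[x y]; rewrite !inE /= negbK.
  by apply/eqP/imsetP => [->|[z _ [-> ->]]]; first exists y.
rewrite card_imset; last by move=> a b [].
rewrite card_prod card_ord; lia.
Qed.

Lemma card_offdiag_split (Q : {set sset}) :
  n * n - n = #|dpairs Q| + #|dpairs (~: Q)|.
Proof.
rewrite -card_offdiag -(cardsID [set p | [set p.1; p.2] \in Q]).
by congr (_ + _); apply: eq_card => p; rewrite !inE // andbC.
Qed.

Lemma card_mingens_deg2 (U : {set sset}) : f_ideal U -> deg2_gens U ->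
  #|mingens U| = #|[set F in ~: U | #|F| == 2]|.
Proof.
move=> [_ fU] dU; have := fU 2 isT; rewrite /nfaces /SR_complex => <-.
suff -> : [set F in facet_complex U | #|F| == 2] = mingens U by [].
apply/setP => F; rewrite [in LHS]inE [in LHS]inE.
apply/idP/idP => [/andP[/existsP[g /andP[gM Fg]] /eqP F2] | FM].
  suff -> : F = g by [].
  by apply/eqP; rewrite eqEcard Fg F2 dU.
by rewrite dU // eqxx andbT; apply/existsP; exists F; rewrite FM subxx.
Qed.

Lemma card_dpairs_nongens (U : {set sset}) : f_ideal U -> deg2_gens U ->
  n * n - n <= 2 * #|dpairs (~: mingens U)|.
Proof.
move=> fU dU; set M := mingens U.
have dpM : #|dpairs M| = 2 * #|M|.
  rewrite card_dpairs; suff -> : [set F in M | #|F| == 2] = M by [].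
  by apply/setP => F; rewrite inE; case FM : (F \in M); rewrite //= dU // eqxx.
have dpCU : #|dpairs (~: U)| = 2 * #|M| by rewrite card_dpairs card_mingens_deg2.
have : dpairs (~: U) \subset dpairs (~: M).
  apply/subsetP => p; rewrite !inE => /andP[-> /=].
  by apply: contra => /andP[].
move/subset_leq_card; have := card_offdiag_split M; lia.
Qed.

Lemma set2_in_WB (B : sset) x y : x != y -> (x \in B) = (y \in B) ->
  [set x; y] \in WB B.
Proof.
move=> nxy xyB; rewrite in_setU.
by case xB : (x \in B); apply/orP; [left | right];
   apply/imset2P; exists x y; rewrite ?inE -?xyB ?xB.
Qed.

Lemma dpairs_nongens_sub (M : {set sset}) (B B' : sset) :
  WB B \subset M -> WB B' \subset M ->
  dpairs (~: M) \subset
    setX (B :&: B') (~: (B :|: B')) :|: setX (~: (B :|: B')) (B :&: B') :|: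
    (setX (B :\: B') (B' :\: B) :|: setX (B' :\: B) (B :\: B')).
Proof.
move=> sBM sB'M; apply/subsetP => -[x y]; rewrite !inE /= => /andP[nxy xyM].
have separates C : WB C \subset M -> (x \in C) != (y \in C).
  move=> sCM; apply/negP => /eqP xyC.
  by move/negP: xyM; apply; apply: (subsetP sCM); apply: set2_in_WB.
move: (separates _ sBM) (separates _ sB'M).
by case: (x \in B); case: (y \in B); case: (x \in B'); case: (y \in B').
Qed.

Lemma card_dpairs_nongens_le (M : {set sset}) (B B' : sset) :
  WB B \subset M -> WB B' \subset M ->
  #|dpairs (~: M)| <=
    2 * (#|B :&: B'| * #|~: (B :|: B')| + #|B :\: B'| * #|B' :\: B|).
Proof.
move=> sBM sB'M.
apply: (leq_trans (subset_leq_card (dpairs_nongens_sub sBM sB'M))).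
apply: (leq_trans (leq_card_setU _ _).1).
rewrite mul2n -addnn addnACA; apply: leq_add.
all: apply: (leq_trans (leq_card_setU _ _).1).
all: by rewrite !cardsX [X in _ + X <= _]mulnC.
Qed.

Lemma card_venn (B B' : sset) :
  n = #|B :&: B'| + #|B :\: B'| + #|B' :\: B| + #|~: (B :|: B')|.
Proof.
have := cardsID B' B; have := cardsID B' (~: B); have := cardsC B.
have -> : ~: B :&: B' = B' :\: B by rewrite setDE setIC.
have -> : ~: B :\: B' = ~: (B :|: B') by rewrite setDE setCU.
rewrite card_ord; lia.
Qed.

End TwoSets.

(* AM-GM gives 4ad <= (a+d)^2 and 4bc <= (b+c)^2, so the hypothesis yields
   2(a+d)(b+c) <= (a+d) + (b+c). *)
Lemma venn_bound N a b c d : N = a + b + c + d ->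
  N * N - N <= 4 * (a * d + b * c) ->
  [\/ a + d = 0, b + c = 0 | a + d = 1 /\ b + c = 1].
Proof.
move=> -> H.
have amgm_ad : 4 * (a * d) <= (a + d) * (a + d) by case: (leqP a d) => ?; nia.
have amgm_bc : 4 * (b * c) <= (b + c) * (b + c) by case: (leqP b c) => ?; nia.
have : 2 * ((a + d) * (b + c)) <= (a + d) + (b + c).
  move: H amgm_ad amgm_bc; move: (a * d) (b * c) => p q; nia.
case: (a + d) => [|x]; first by constructor 1.
case: (b + c) => [|y]; first by constructor 2.
by move=> ?; constructor 3; nia.
Qed.

Lemma WB_setC n (B : {set 'I_n}) : WB (~: B) = WB B.
Proof. by rewrite /WB setCK setUC. Qed.

Lemma WB_small n (B : {set 'I_n}) : #|B| <= 1 -> #|~: B| <= 1 -> WB B = set0.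
Proof.
have no_pair (C : {set 'I_n}) : #|C| <= 1 ->
    [set [set x; y] | x in C, y in C & x != y] = set0.
  move=> C1; apply/setP => F; rewrite inE; apply/imset2P => -[x y xC].
  rewrite inE => /andP[yC nxy] _.
  have /subset_leq_card : [set x; y] \subset C by rewrite subUset !sub1set xC.
  by rewrite cards2 nxy => /leq_trans/(_ C1).
by move=> B1 CB1; rewrite /WB !no_pair ?setU0.
Qed.

Lemma WB_mingens_uniq n (U : {set {set 'I_n}}) (B B' : {set 'I_n}) :
  f_ideal U -> deg2_gens U -> WB B \subset mingens U -> WB B' \subset mingens U ->
  [\/ B' = B, B' = ~: B | n = 2].
Proof.
move=> fU dU sBM sB'M.
have := leq_trans (card_dpairs_nongens fU dU)
                  (leq_mul (leqnn 2) (card_dpairs_nongens_le sBM sB'M)).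
rewrite mulnA => /(venn_bound (card_venn B B'))[ad0 | bc0 | [ad1 bc1]].
- constructor 2; apply/setP => x; rewrite inE.
  have /eqP/cards0_eq/setP/(_ x) : #|B :&: B'| == 0 by rewrite -leqn0; lia.
  have /eqP/cards0_eq/setP/(_ x) : #|~: (B :|: B')| == 0 by rewrite -leqn0; lia.
  by rewrite !inE; case: (x \in B); case: (x \in B').
- constructor 1; apply/eqP; rewrite eqEsubset -!setD_eq0 -!cards_eq0.
  by apply/andP; split; apply/eqP; lia.
- by constructor 3; have := card_venn B B'; lia.
Qed.

Theorem proposition4p10 (n i j : nat) :
  0 < i <= n./2 -> 0 < j <= n./2 ->
  (i != j -> forall U : {set {set 'I_n}}, ~ (in_W i U /\ in_W j U)) /\
  (forall U : {set {set 'I_n}}, in_W i U ->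
     (exists B : {set 'I_n}, #|B| = i /\ WB B \subset mingens U) /\
     (forall B1 B2 : {set 'I_n}, #|B1| = i -> #|B2| = i ->
        WB B1 \subset mingens U -> WB B2 \subset mingens U -> WB B1 = WB B2)).
Proof.
rewrite -divn2 => /andP[i0 iLn] /andP[j0 jLn]; split.
  move=> nij U [[fU dU [B [_ _ cB sB]]] [_ _ [B' [_ _ cB' sB']]]].
  have := cardsC B; rewrite card_ord => cBC.
  by case: (WB_mingens_uniq fU dU sB sB') => E; subst; move/eqP: nij; lia.
move=> U [fU dU [B [_ _ cB sB]]]; split; first by exists B.
move=> B1 B2 c1 c2 s1 s2.
case: (WB_mingens_uniq fU dU s1 s2) => [-> | -> | n2]; rewrite ?WB_setC //.
have := cardsC B1; have := cardsC B2; rewrite card_ord => ? ?.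
by rewrite !WB_small //; lia.
Qed.
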